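(* Let $S=\langle \underline{S},\sqcap,\sqcup,\Rightarrow,L,\neg,0,1\rangle$ be a rough algebra, and put $M(x)=\neg L(\neg x)$ for $x\in\underline{S}$. Define the binary relation $T$ on $\underline{S}$ by $(a,b)\in T$ if and only if there exists $c\in\underline{S}$ with $L(c)\le a\le M(c)$ and $L(c)\le b\le M(c)$ (where $\le$ is the lattice order of $\langle\underline{S},\sqcap,\sqcup\rangle$). Then $T$ is a compatible tolerance on $S$: it is reflexive and symmetric, and whenever $(a,b),(c,e)\in T$ we have $(a\sqcap c,\,b\sqcap e)\in T$ and $(a\sqcup c,\,b\sqcup e)\in T$.
   Context: A pre-rough algebra is an algebra $\langle\underline{S},\sqcap,\sqcup,\Rightarrow,L,\neg,0,1\rangle$ of type $(2,2,2,1,1,0,0)$ such that: $\langle\underline{S},\sqcap,\sqcup,\neg\rangle$ is a de Morgan lattice (with bounds $0,1$); $\neg\neg a=a$; $L(a)\sqcap a=L(a)$; $LL(a)=L(a)$; $L(1)=1$; $L(a\sqcap b)=L(a)\sqcap L(b)$; $\neg L\neg L(a)=L(a)$; $\neg L(a)\sqcup L(a)=1$; $L(a\sqcup b)=L(a)\sqcup L(b)$; if $L(a)\sqcap L(b)=L(a)$ and $\neg L(\neg(a\sqcap b))=\neg L(\neg a)$ then $a\sqcap b=a$; and $a\Rightarrow b=(\neg L(a)\sqcup L(b))\sqcap(L(\neg a)\sqcup\neg L(\neg b))$. A rough algebra is a completely distributive pre-rough algebra. The relation $T$ is called the coapproximability relation. *)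

Section RoughAlgebra.
Variable S : Type.
Variables (meet join imp : S -> S -> S) (L neg : S -> S) (zero one : S).

Definition lle (a b : S) : Prop := meet a b = a.

Definition is_de_morgan_lattice : Prop :=
  (forall a b c, meet a (meet b c) = meet (meet a b) c) /\
  (forall a b c, join a (join b c) = join (join a b) c) /\
  (forall a b, meet a b = meet b a) /\
  (forall a b, join a b = join b a) /\
  (forall a b, meet a (join a b) = a) /\
  (forall a b, join a (meet a b) = a) /\
  (forall a b c, meet a (join b c) = join (meet a b) (meet a c)) /\
  (forall a, join zero a = a) /\
  (forall a, meet one a = a) /\
  (forall a, neg (neg a) = a) /\
  (forall a b, neg (meet a b) = join (neg a) (neg b)) /\
  (forall a b, neg (join a b) = meet (neg a) (neg b)).

Definition is_pre_rough_algebra : Prop :=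
  is_de_morgan_lattice /\
  (forall a, neg (neg a) = a) /\
  (forall a, meet (L a) a = L a) /\
  (forall a, L (L a) = L a) /\
  L one = one /\
  (forall a b, L (meet a b) = meet (L a) (L b)) /\
  (forall a, neg (L (neg (L a))) = L a) /\
  (forall a, join (neg (L a)) (L a) = one) /\
  (forall a b, L (join a b) = join (L a) (L b)) /\
  (forall a b, meet (L a) (L b) = L a ->
               neg (L (neg (meet a b))) = neg (L (neg a)) ->
               meet a b = a) /\
  (forall a b, imp a b = meet (join (neg (L a)) (L b))
                              (join (L (neg a)) (neg (L (neg b))))).

Definition is_lub (X : S -> Prop) (s : S) : Prop :=
  (forall x, X x -> lle x s) /\ (forall u, (forall x, X x -> lle x u) -> lle s u).
Definition is_glb (X : S -> Prop) (s : S) : Prop :=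
  (forall x, X x -> lle s x) /\ (forall u, (forall x, X x -> lle u x) -> lle u s).

Definition is_complete_lattice : Prop :=
  (forall X : S -> Prop, exists s, is_lub X s) /\
  (forall X : S -> Prop, exists s, is_glb X s).

(* complete distributivity:
   /\_{i in I} \/_{j in J i} a i j = \/_{f in Prod_i J i} /\_{i in I} a i (f i) *)
Definition is_completely_distributive : Prop :=
  is_complete_lattice /\
  forall (I : Type) (J : I -> Type) (a : forall i, J i -> S)
         (l : I -> S) (m : S) (g : (forall i, J i) -> S),
    (forall i, is_lub (fun x => exists j, x = a i j) (l i)) ->
    is_glb (fun x => exists i, x = l i) m ->
    (forall f, is_glb (fun x => exists i, x = a i (f i)) (g f)) ->
    is_lub (fun x => exists f, x = g f) m.

Definition is_rough_algebra : Prop :=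
  is_pre_rough_algebra /\ is_completely_distributive.

Definition Mop (x : S) : S := neg (L (neg x)).

Definition Trel (a b : S) : Prop :=
  exists c, lle (L c) a /\ lle a (Mop c) /\ lle (L c) b /\ lle b (Mop c).

End RoughAlgebra.

(* The witnesses combine: if L c <= a, b <= M c and L d <= x, y <= M d, then
   c /\ d (resp. c \/ d) witnesses the meets (resp. joins), because L and
   M = neg o L o neg both preserve binary meets and joins (the latter by the
   De Morgan laws) and the lattice operations are monotone.  Reflexivity uses
   L a <= a <= M a. *)


Section Coapproximability.
Variable S : Type.
Variables (meet join : S -> S -> S) (L neg : S -> S).
Hypothesis meet_assoc : forall a b c, meet a (meet b c) = meet (meet a b) c.
Hypothesis join_assoc : forall a b c, join a (join b c) = join (join a b) c.
Hypothesis meet_comm : forall a b, meet a b = meet b a.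
Hypothesis join_comm : forall a b, join a b = join b a.
Hypothesis meet_join_absorb : forall a b, meet a (join a b) = a.
Hypothesis join_meet_absorb : forall a b, join a (meet a b) = a.
Hypothesis neg_involutive : forall a, neg (neg a) = a.
Hypothesis neg_meet : forall a b, neg (meet a b) = join (neg a) (neg b).
Hypothesis neg_join : forall a b, neg (join a b) = meet (neg a) (neg b).
Hypothesis L_deflationary : forall a, meet (L a) a = L a.
Hypothesis L_meet : forall a b, L (meet a b) = meet (L a) (L b).
Hypothesis L_join : forall a b, L (join a b) = join (L a) (L b).

Notation le := (lle S meet).
Notation M := (Mop S L neg).
Notation T := (Trel S meet L neg).

Lemma lle_join_eq u v : le u v <-> join u v = v.
Proof.
  unfold lle; split; intro H.
  - rewrite <- H, join_comm, meet_comm. apply join_meet_absorb.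
  - rewrite <- H. apply meet_join_absorb.
Qed.

Lemma meet_lle_meet a c x y : le a x -> le c y -> le (meet a c) (meet x y).
Proof.
  unfold lle; intros Hax Hcy.
  replace (meet (meet a c) (meet x y)) with (meet (meet a x) (meet c y)).
  - rewrite Hax, Hcy; reflexivity.
  - rewrite !meet_assoc. f_equal. rewrite <- !meet_assoc. f_equal. apply meet_comm.
Qed.

Lemma join_lle_join a c x y : le a x -> le c y -> le (join a c) (join x y).
Proof.
  intros Hax%lle_join_eq Hcy%lle_join_eq; apply lle_join_eq.
  replace (join (join a c) (join x y)) with (join (join a x) (join c y)).
  - rewrite Hax, Hcy; reflexivity.
  - rewrite !join_assoc. f_equal. rewrite <- !join_assoc. f_equal. apply join_comm.
Qed.

Lemma neg_lle_anti x y : le x y -> le (neg y) (neg x).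
Proof.
  unfold lle; intro Hxy. rewrite <- Hxy, neg_meet, join_comm. apply meet_join_absorb.
Qed.

Lemma lle_M a : le a (M a).
Proof.
  pose proof (neg_lle_anti _ _ (L_deflationary (neg a))) as H.
  rewrite neg_involutive in H. exact H.
Qed.

Lemma M_meet x y : M (meet x y) = meet (M x) (M y).
Proof. unfold Mop. rewrite neg_meet, L_join, neg_join. reflexivity. Qed.

Lemma M_join x y : M (join x y) = join (M x) (M y).
Proof. unfold Mop. rewrite neg_join, L_meet, neg_meet. reflexivity. Qed.

Lemma Trel_refl a : T a a.
Proof.
  exists a. pose proof (L_deflationary a). pose proof (lle_M a). tauto.
Qed.

Lemma Trel_sym a b : T a b -> T b a.
Proof. intros [c Hc]. exists c. tauto. Qed.

Lemma Trel_meet a b c e : T a b -> T c e -> T (meet a c) (meet b e).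
Proof.
  intros [d [Ha1 [Ha2 [Hb1 Hb2]]]] [d' [Hc1 [Hc2 [He1 He2]]]].
  exists (meet d d'). rewrite L_meet, M_meet.
  repeat split; apply meet_lle_meet; assumption.
Qed.

Lemma Trel_join a b c e : T a b -> T c e -> T (join a c) (join b e).
Proof.
  intros [d [Ha1 [Ha2 [Hb1 Hb2]]]] [d' [Hc1 [Hc2 [He1 He2]]]].
  exists (join d d'). rewrite L_join, M_join.
  repeat split; apply join_lle_join; assumption.
Qed.

End Coapproximability.

Theorem proposition2p1 (S : Type) (meet join imp : S -> S -> S)
  (L neg : S -> S) (zero one : S) :
  is_rough_algebra S meet join imp L neg zero one ->
  let T := Trel S meet L neg in
  (forall a, T a a) /\
  (forall a b, T a b -> T b a) /\
  (forall a b c e, T a b -> T c e ->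
     T (meet a c) (meet b e) /\ T (join a c) (join b e)).
Proof.
  intros [[[mA [jA [mC [jC [mJ [jM [_ [_ [_ [nn [nM nJ]]]]]]]]]]]
          [_ [Lle [_ [_ [LM [_ [_ [LJ _]]]]]]]]] _] T.
  split; [|split].
  - intro a; eapply Trel_refl; eassumption.
  - apply Trel_sym.
  - intros a b c e Hab Hce; split.
    + eapply Trel_meet; eassumption.
    + eapply Trel_join; eassumption.
Qed.
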